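(* Let $v\ge 2$ be an integer and $\theta\in[0,1]$. In the tipsy cop and drunken robber game on the complete graph $K_v$ with cop and robber starting at distinct vertices, let $X$ be the capture time, i.e. the number of the move at which the capture occurs. Then \[ \mathbb{E}[X]=\frac{(2v-3)(v-1)}{(v-1)^2-\theta(v-2)^2}. \]
   Context: Tipsy cop and drunken robber game on a finite connected graph $G$: a cop and a robber are placed at distinct vertices. Moves are numbered $1,2,3,\dots$; the robber makes the odd-numbered moves and the cop the even-numbered moves, and on each move the mover must move to a vertex adjacent to its current vertex (staying put is not allowed). The robber always moves to a neighbor chosen uniformly at random. The cop, independently at each of her moves, with probability $\theta$ moves to a neighbor chosen uniformly at random, and with probability $1-\theta$ makes a directed move to a neighbor lying on a shortest path to the robber's current vertex (in particular onto the robber's vertex if it is adjacent). All random choices are independent. The robber is captured (and the game ends) as soon as both occupy the same vertex, whether the robber moves onto the cop or the cop moves onto the robber. *)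

From HB Require Import structures.
From mathcomp Require Import all_boot all_order all_algebra.
From mathcomp Require Import all_classical all_reals all_analysis.
Set Implicit Arguments. Unset Strict Implicit. Unset Printing Implicit Defensive.
Import Order.TTheory GRing.Theory Num.Theory.
Local Open Scope ring_scope.

Section TipsyCop.
Variables (R : realType) (T : finType) (e : rel T) (theta : R).

Fixpoint within (k : nat) (x y : T) : bool :=
  match k with
  | 0 => x == y
  | k'.+1 => within k' x y || [exists z, e x z && within k' z y]
  end.

(* graph distance (for a connected finite graph it is < #|T|) *)
Definition gdist (x y : T) : nat := find (fun k => within k x y) (iota 0 #|T|).

Definition nbrs (x : T) : {set T} := [set y | e x y].
Definition deg (x : T) : nat := #|nbrs x|.

Definition dirnbrs (c r : T) : {set T} :=
  [set y | e c y & (gdist y r).+1 == gdist c r].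

(* A sub-probability mass on uncaptured positions (cop, robber). *)
Definition robber_step (p : T * T -> R) : T * T -> R :=
  fun s => \sum_(r : T) p (s.1, r) * ((e r s.2)%:R / (deg r)%:R).

Definition cop_step (p : T * T -> R) : T * T -> R :=
  fun s => \sum_(c : T) p (c, s.2) *
     (theta * ((e c s.1)%:R / (deg c)%:R) +
      (1 - theta) * ((s.1 \in dirnbrs c s.2)%:R / #|dirnbrs c s.2|%:R)).

Definition move_step (m : nat) (p : T * T -> R) : T * T -> R :=
  if odd m then robber_step p else cop_step p.

Definition kill_captured (p : T * T -> R) : T * T -> R :=
  fun s => if s.1 == s.2 then 0 else p s.

Fixpoint alive (c0 r0 : T) (n : nat) : T * T -> R :=
  match n with
  | 0 => fun s => (s == (c0, r0))%:R
  | n'.+1 => kill_captured (move_step n (alive c0 r0 n'))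
  end.

Definition capture_prob (c0 r0 : T) (m : nat) : R :=
  match m with
  | 0 => 0
  | m'.+1 => \sum_(x : T) move_step m (alive c0 r0 m') (x, x)
  end.

Definition expected_capture_time (c0 r0 : T) : \bar R :=
  (\sum_(m <oo) ((m%:R * capture_prob c0 r0 m)%:E))%E.

End TipsyCop.

Definition complete_rel (v : nat) : rel 'I_v := fun i j => i != j.

From HB Require Import structures.
From mathcomp Require Import all_boot all_order all_algebra.
From mathcomp Require Import all_classical all_reals all_analysis.
From mathcomp Require Import ring lra zify.
Import Order.TTheory GRing.Theory Num.Theory numFieldNormedType.Exports.
Set Implicit Arguments. Unset Strict Implicit. Unset Printing Implicit Defensive.
Local Open Scope ring_scope.

(* On K_v every walker moves to a uniformly random other vertex and a directed
   cop move goes straight onto the robber.  So whatever the distinct positions,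
   a robber move ends the game with probability p = 1/(v-1) and a cop move
   with probability q = theta/(v-1) + (1 - theta); the survival probabilities
   thus satisfy M_(n+2) = a M_n with a = (1-p)(1-q) < 1.  The partial means
   S_n = sum_(m<n) m P(X = m) obey S_(n+3) = a S_(n+1) + (2 - p - 2 a M_n):
   they increase and stay below the fixed point (2-p)/(1-a), hence converge,
   and letting n -> oo (where M_n -> 0) identifies the limit as (2-p)/(1-a). *)

Section AffineRecursion.
Local Open Scope classical_set_scope.

Lemma affine_recursion_limit {R : realType} {u w : R^nat} {k : nat}
    {a b l : R} :
  a != 1 -> u @ \oo --> l -> w @ \oo --> b ->
  (forall n, u (n + k)%N = a * u n + w n) -> l = b / (1 - a).
Proof.
move=> a_neq1 ul wb u_rec.
have shift_l : (fun n => u (n + k)%N) @ \oo --> l by rewrite (cvg_shiftn k).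
have shift_alb : (fun n => u (n + k)%N) @ \oo --> a * l + b.
  by under eq_fun do rewrite u_rec; apply: cvgD => //; exact: cvgMl_tmp ul.
have l_fix := cvg_unique (@Rhausdorff R) shift_l shift_alb.
have a1 : 1 - a != 0 by rewrite subr_eq0 eq_sym.
apply: (mulIf a1); rewrite divfK // mulrBr mulr1 {1}l_fix; ring.
Qed.

End AffineRecursion.

Definition alt_rate {R : Type} (p q : R) (m : nat) : R :=
  if odd m then p else q.

Section AlternatingCapture.
Local Open Scope classical_set_scope.
Variables (R : realType) (p q : R) (surv capt : nat -> R).
Hypotheses (p_gt0 : 0 < p) (p_le1 : p <= 1) (q_ge0 : 0 <= q) (q_le1 : q <= 1).
Hypotheses (surv0 : surv 0 = 1) (capt0 : capt 0 = 0)
  (captS : forall n, capt n.+1 = alt_rate p q n.+1 * surv n)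
  (survS : forall n, surv n.+1 = surv n - capt n.+1).

Local Notation a := ((1 - p) * (1 - q)).

Let a_ge0 : 0 <= a.
Proof. by rewrite mulr_ge0 // subr_ge0. Qed.

Let a_lt1 : a < 1.
Proof. by move: p_gt0 p_le1 q_ge0 q_le1 => ????; nra. Qed.

Let a_neq1 : a != 1.
Proof. by rewrite lt_eqF. Qed.

Let rate_ge0 m : 0 <= alt_rate p q m.
Proof. by rewrite /alt_rate; case: odd => //; apply: ltW. Qed.

Let rate_le1 m : alt_rate p q m <= 1.
Proof. by rewrite /alt_rate; case: odd. Qed.

Let surv_ge0 n : 0 <= surv n.
Proof.
elim: n => [|n IH]; first by rewrite surv0.
by rewrite survS captS -[X in X - _]mul1r -mulrBl mulr_ge0 // subr_ge0.
Qed.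

Let capt_ge0 n : 0 <= capt n.
Proof. by case: n => [|n]; rewrite ?capt0 // captS mulr_ge0. Qed.

Let survSS n : surv n.+2 = a * surv n.
Proof. by rewrite !(survS, captS) /alt_rate /=; case: odd => /=; ring. Qed.

Let captSS n : capt n.+3 = a * capt n.+1.
Proof. by rewrite !captS survSS /alt_rate /= negbK mulrCA. Qed.

Let mean_part n := \sum_(0 <= m < n) m%:R * capt m.

Let mean_partS n : mean_part n.+1 = mean_part n + n%:R * capt n.
Proof. exact: big_nat_recr. Qed.

Let mean_part_nondecreasing : nondecreasing_seq mean_part.
Proof. by apply/nondecreasing_seqP => n; rewrite mean_partS lerDl mulr_ge0. Qed.

Let mean_part_rec n :
  mean_part n.+3 = a * mean_part n.+1 + (2 - p - 2 * a * surv n).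
Proof.
elim: n => [|n IH].
  rewrite !mean_partS /mean_part big_nil capt0 !captS survS captS surv0.
  by rewrite /alt_rate /=; ring.
rewrite mean_partS IH (mean_partS n.+1) captSS (survS n) -addn2 natrD.
ring.
Qed.

Let mean_part_le n : mean_part n.+2 <= (2 - p) / (1 - a).
Proof.
have one_minus_a_gt0 : 0 < 1 - a by rewrite subr_gt0.
have fixE : a * ((2 - p) / (1 - a)) + (2 - p) = (2 - p) / (1 - a).
  by field; rewrite gt_eqF.
elim: n => [|n IH].
  rewrite !mean_partS /mean_part big_nil capt0 captS surv0 /alt_rate /=.
  rewrite mul0r !add0r !mul1r mulr1 ler_pdivlMr //.
  by move: p_gt0 p_le1 a_ge0 => ???; nra.
rewrite mean_part_rec -[leRHS]fixE lerD ?ler_wpM2l //.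
- exact: le_trans (mean_part_nondecreasing (leqnSn _)) IH.
- by rewrite gerBl mulr_ge0 // mulr_ge0.
Qed.

Let surv_cvg0 : surv @ \oo --> 0.
Proof.
have surv_cvg : cvgn surv.
  apply: nonincreasing_is_cvgn.
    by apply/nonincreasing_seqP => n; rewrite survS gerBl.
  by exists 0 => _ [n _ <-].
have surv_rec n : surv (n + 2)%N = a * surv n + 0 by rewrite addn2 survSS addr0.
have surv_lim : limn surv = 0.
  by rewrite (affine_recursion_limit a_neq1 surv_cvg (cvg_cst 0) surv_rec)
    mul0r.
by rewrite -surv_lim.
Qed.

Lemma alternating_capture_mean_cvg :
  (fun n => \sum_(0 <= m < n) m%:R * capt m) @ \oo --> (2 - p) / (1 - a).
Proof.
have mean_cvg : cvgn mean_part.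
  apply: nondecreasing_is_cvgn => //; exists ((2 - p) / (1 - a)) => _ [n _ <-].
  apply: le_trans (mean_part_le n).
  exact: mean_part_nondecreasing (ltnW (leqnSn n.+1)).
have shift_cvg : (fun n => mean_part (n + 1)%N) @ \oo --> limn mean_part.
  by rewrite (cvg_shiftn 1).
have w_cvg : (fun n => 2 - p - 2 * a * surv n) @ \oo --> 2 - p - 2 * a * 0.
  by apply: cvgB; [exact: cvg_cst | exact: cvgMl_tmp surv_cvg0].
have mean_rec n : mean_part (n + 2 + 1)%N =
    a * mean_part (n + 1)%N + (2 - p - 2 * a * surv n).
  by rewrite !addn1 addn2.
have mean_lim : limn mean_part = (2 - p) / (1 - a).
  by rewrite (affine_recursion_limit a_neq1 shift_cvg w_cvg mean_rec)
    mulr0 subr0.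
by rewrite -mean_lim; exact: mean_cvg.
Qed.

End AlternatingCapture.

Section GameMass.
Variables (R : realType) (T : finType) (e : rel T) (theta : R).

Lemma sum_pair (F : T * T -> R) : \sum_s F s = \sum_i \sum_j F (i, j).
Proof. by rewrite pair_bigA; apply: eq_bigr => -[]. Qed.

Lemma sum_uniform (A : {set T}) :
  (0 < #|A|)%N -> \sum_x (x \in A)%:R / #|A|%:R = 1 :> R.
Proof.
move=> A_gt0.
have sumA : \sum_x (x \in A)%:R = #|A|%:R :> R.
  rewrite -sum1_card natr_sum [RHS]big_mkcond.
  by apply: eq_bigr => x _; case: (x \in A).
by rewrite -mulr_suml sumA divff // pnatr_eq0 -lt0n.
Qed.

Definition survival (c0 r0 : T) (n : nat) : R :=
  \sum_s alive e theta c0 r0 n s.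

Hypotheses (deg_gt0 : forall x, (0 < deg e x)%N)
  (dirnbrs_gt0 : forall c r, c != r -> (0 < #|dirnbrs e c r|)%N).

Lemma sum_nbrs_uniform x : \sum_y (e x y)%:R / (deg e x)%:R = 1 :> R.
Proof.
rewrite -[RHS](sum_uniform (deg_gt0 x)).
by apply: eq_bigr => y _; rewrite inE.
Qed.

Lemma robber_step_mass (P : T * T -> R) :
  \sum_s robber_step e P s = \sum_s P s.
Proof.
rewrite sum_pair [RHS]sum_pair; apply: eq_bigr => c _ /=.
rewrite exchange_big; apply: eq_bigr => r _ /=.
by rewrite -big_distrr /= sum_nbrs_uniform mulr1.
Qed.

Lemma cop_step_mass (P : T * T -> R) : (forall x, P (x, x) = 0) ->
  \sum_s cop_step e theta P s = \sum_s P s.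
Proof.
move=> P_diag.
rewrite sum_pair [RHS]sum_pair exchange_big [RHS]exchange_big.
apply: eq_bigr => r _ /=; rewrite exchange_big; apply: eq_bigr => c _ /=.
have [->|cr] := eqVneq c r; first by rewrite P_diag big1 // => x; rewrite mul0r.
rewrite -big_distrr big_split -!big_distrr /= sum_nbrs_uniform.
by rewrite sum_uniform ?dirnbrs_gt0 // !mulr1 addrC subrK mulr1.
Qed.

Lemma move_step_mass m (P : T * T -> R) : (forall x, P (x, x) = 0) ->
  \sum_s move_step e theta m P s = \sum_s P s.
Proof.
move=> P_diag; rewrite /move_step.
by case: odd; [exact: robber_step_mass | exact: cop_step_mass].
Qed.

Lemma sum_kill_captured (P : T * T -> R) :
  \sum_s kill_captured P s = \sum_s P s - \sum_x P (x, x).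
Proof.
apply/eqP; rewrite eq_sym subr_eq; apply/eqP.
rewrite !sum_pair -big_split; apply: eq_bigr => c _ /=.
rewrite (bigD1 c) //= [in RHS](bigD1 c) //= /kill_captured /= eqxx add0r addrC.
by congr (_ + _); apply: eq_bigr => y; rewrite eq_sym => /negbTE ->.
Qed.

Lemma alive_diag c0 r0 n x : c0 != r0 -> alive e theta c0 r0 n (x, x) = 0.
Proof.
move=> c0r0; case: n => [|n] /=; last by rewrite /kill_captured eqxx.
by case: eqP => // -[c0E r0E]; move: c0r0; rewrite -c0E -r0E eqxx.
Qed.

Lemma survivalS c0 r0 n : c0 != r0 ->
  survival c0 r0 n.+1 = survival c0 r0 n - capture_prob e theta c0 r0 n.+1.
Proof.
move=> c0r0; rewrite /survival /= sum_kill_captured move_step_mass //.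
by move=> x; apply: alive_diag.
Qed.

Lemma survival0 c0 r0 : survival c0 r0 0 = 1.
Proof.
rewrite /survival /= (bigD1 (c0, r0)) //= eqxx big1 ?addr0 // => s.
by move=> /negbTE ->.
Qed.

Local Open Scope classical_set_scope.

Lemma expected_capture_time_lim c0 r0 (l : R) :
  (fun n => \sum_(0 <= m < n) m%:R * capture_prob e theta c0 r0 m) @ \oo
    --> l ->
  expected_capture_time e theta c0 r0 = l%:E.
Proof.
move=> mean_l; have mean_lim := @cvg_lim _ (@Rhausdorff R) _ _ _ _ _ mean_l.
rewrite -mean_lim -(EFin_lim (cvgP _ mean_l)) /expected_capture_time.
by congr lim; under eq_fun do rewrite sumEFin.
Qed.

End GameMass.

Lemma complete_mean_closed_form (R : numFieldType) (v : nat) (theta : R) :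
  (2 <= v)%N ->
  (2 - (v - 1)%:R^-1) /
    (1 - (1 - (v - 1)%:R^-1) * (1 - (theta / (v - 1)%:R + (1 - theta)))) =
  ((2 * v - 3)%:R * (v - 1)%:R) / ((v - 1)%:R ^+ 2 - theta * (v - 2)%:R ^+ 2).
Proof.
move=> v_ge2.
have -> : (v - 1 = (v - 2).+1)%N by lia.
have -> : (2 * v - 3 = (v - 2).+1 + (v - 2))%N by lia.
rewrite natrD -!natr1; set k : R := (v - 2)%:R.
have k1_neq0 : k + 1 != 0 by rewrite gt_eqF // ltr_wpDl ?ler0n.
have -> : 1 - (1 - (k + 1)^-1) * (1 - (theta / (k + 1) + (1 - theta))) =
    ((k + 1) ^+ 2 - theta * k ^+ 2) / (k + 1) ^+ 2 by field.
by rewrite invf_div mulrA; congr (_ / _); field.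
Qed.

Section CompleteGraph.
Variables (R : realType) (v : nat) (theta : R).
Hypotheses (v_ge2 : (2 <= v)%N) (theta_ge0 : 0 <= theta)
  (theta_le1 : theta <= 1).
Local Notation K := (@complete_rel v).

Lemma nbrs_complete (x : 'I_v) : nbrs K x = [set~ x].
Proof. by apply/finset.setP => y; rewrite !inE /complete_rel eq_sym. Qed.

Lemma deg_complete (x : 'I_v) : deg K x = (v - 1)%N.
Proof. by rewrite /deg nbrs_complete cardsC1 card_ord subn1. Qed.

Lemma deg_complete_gt0 (x : 'I_v) : (0 < deg K x)%N.
Proof. by rewrite deg_complete subn_gt0. Qed.

Lemma gdist_complete (x y : 'I_v) : gdist K x y = (x != y).
Proof.
have iotaE : iota 0 #|'I_v| = [:: 0, 1 & iota 2 (v - 2)]%N.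
  by rewrite card_ord -{1}(subnKC v_ge2).
rewrite /gdist iotaE /=.
have [//|xy] := eqVneq x y; suff -> : [exists z, K x z && (z == y)] by [].
by apply/existsP; exists y; rewrite eqxx andbT.
Qed.

Lemma dirnbrs_complete (c r : 'I_v) : c != r -> dirnbrs K c r = [set r].
Proof.
move=> cr; apply/finset.setP => y; rewrite !inE !gdist_complete cr.
have [->|yr] := eqVneq y r; first by rewrite /complete_rel cr.
by rewrite andbF.
Qed.

Lemma dirnbrs_complete_gt0 (c r : 'I_v) : c != r -> (0 < #|dirnbrs K c r|)%N.
Proof. by move=> cr; rewrite dirnbrs_complete // cards1. Qed.

Lemma robber_step_capture_complete (P : 'I_v * 'I_v -> R) :
  (forall x, P (x, x) = 0) ->
  \sum_x robber_step K P (x, x) = (v - 1)%:R^-1 * \sum_s P s.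
Proof.
move=> P_diag; rewrite sum_pair big_distrr; apply: eq_bigr => x _ /=.
rewrite big_distrr; apply: eq_bigr => r _ /=.
rewrite deg_complete /complete_rel.
have [->|rx] := eqVneq r x; first by rewrite P_diag !mul0r mulr0.
by rewrite mul1r mulrC.
Qed.

Lemma cop_step_capture_complete (P : 'I_v * 'I_v -> R) :
  (forall x, P (x, x) = 0) ->
  \sum_x cop_step K theta P (x, x) =
    (theta / (v - 1)%:R + (1 - theta)) * \sum_s P s.
Proof.
move=> P_diag; rewrite sum_pair [X in _ * X]exchange_big big_distrr.
apply: eq_bigr => r _ /=; rewrite big_distrr; apply: eq_bigr => c _ /=.
have [->|cr] := eqVneq c r; first by rewrite P_diag !mul0r mulr0.
rewrite deg_complete /complete_rel dirnbrs_complete // cards1 set11.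
by rewrite cr /= divr1 !mul1r mulr1 mulrC.
Qed.

Lemma capture_prob_complete (c0 r0 : 'I_v) n : c0 != r0 ->
  capture_prob K theta c0 r0 n.+1 =
    alt_rate (v - 1)%:R^-1 (theta / (v - 1)%:R + (1 - theta)) n.+1 *
    survival K theta c0 r0 n.
Proof.
move=> c0r0; rewrite /= /move_step /alt_rate.
case: odd;
  [apply: robber_step_capture_complete | apply: cop_step_capture_complete];
  by move=> x; apply: alive_diag.
Qed.

Local Open Scope classical_set_scope.

Lemma mean_capture_time_complete_cvg (c0 r0 : 'I_v) : c0 != r0 ->
  (fun n => \sum_(0 <= m < n) m%:R * capture_prob K theta c0 r0 m) @ \oo -->
  (2 - (v - 1)%:R^-1) /
    (1 - (1 - (v - 1)%:R^-1) * (1 - (theta / (v - 1)%:R + (1 - theta)))).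
Proof.
move=> c0r0.
have v1_ge1 : 1 <= (v - 1)%:R :> R by rewrite ler1n subn_gt0.
have v1_gt0 : 0 < (v - 1)%:R :> R by rewrite ltr0n subn_gt0.
have theta_div_le : theta / (v - 1)%:R <= theta.
  by rewrite ler_pdivrMr // ler_peMr.
apply: (alternating_capture_mean_cvg (surv := survival K theta c0 r0)).
- by rewrite invr_gt0.
- by rewrite invf_le1.
- by rewrite addr_ge0 ?divr_ge0 ?subr_ge0 // ltW.
- lra.
- exact: survival0.
- by [].
- by move=> n; apply: capture_prob_complete.
- move=> n; apply: survivalS => //.
  + exact: deg_complete_gt0.
  + exact: dirnbrs_complete_gt0.
Qed.

End CompleteGraph.

Theorem mainTheorem2 (R : realType) (v : nat) (theta : R) (c0 r0 : 'I_v) :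
  (2 <= v)%N -> 0 <= theta -> theta <= 1 -> c0 != r0 ->
  expected_capture_time (@complete_rel v) theta c0 r0 =
  (((2 * v - 3)%:R * (v - 1)%:R) /
     ((v - 1)%:R ^+ 2 - theta * (v - 2)%:R ^+ 2))%:E.
Proof.
move=> v_ge2 theta_ge0 theta_le1 c0r0.
rewrite -complete_mean_closed_form //.
exact/expected_capture_time_lim/mean_capture_time_complete_cvg.
Qed.
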